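(* Let $c$ be a prefix equivariant statistic and $\theta>0$. Let $2\le k\le N$, $p=e_{k-1}=12\cdots(k-1)$ and $q=e_k=12\cdots k$. Let $R$ be the set of permutations $r\in\mathfrak S_k$ with $r\ne q$ whose $(k-1)$-st prefix flattening equals $p$. Then $$\widehat S^c(p)=\widehat{\bar S}(q)+\widehat S^c(q)\sum_{r\in R}\theta^{c(r)-c(q)},\qquad \widehat S(p)=\widehat S(q)\sum_{r\in R}\theta^{c(r)-c(q)}.$$
   Context: Permutations of $\{1,\dots,m\}$ are written in one-line notation; $\mathfrak S_m$ is the set of all of them. Fix $N\ge1$, a statistic $c:\bigcup_{m=1}^N\mathfrak S_m\to\mathbb Z_{\ge0}$ and a real $\theta>0$. Prefixes and containment: - A prefix is an element of $\bigcup_{m=1}^N\mathfrak S_m$. - $\pi^{(i)}\in\mathfrak S_i$ denotes the unique permutation with the same relative order as $\pi_1,\dots,\pi_i$. - A prefix $r\in\mathfrak S_n$ contains $p\in\mathfrak S_m$ ($m\le n$) if $r^{(m)}=p$. - For $p\in\mathfrak S_m$ and $\pi\in\mathfrak S_N$: $\pi$ is $p$-prefixed if $\pi^{(m)}=p$, and $p$-winnable if moreover $\pi_m=N$. Probabilities: - $D(p)=\sum_{p\text{-prefixed }\pi\in\mathfrak S_N}\theta^{c(\pi)}$. - $S(p)=\big(\sum_{p\text{-winnable }\pi}\theta^{c(\pi)}\big)/D(p)$. - $S^c(p)=0$ if $p\in\mathfrak S_N$; for $p\in\mathfrak S_m$ with $m<N$, $S^c(p)=\big(\sum_{q'\in\mathfrak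 S_{m+1}\text{ containing }p}D(q')\bar S(q')\big)/D(p)$. - $\bar S(p)=\max(S(p),S^c(p))$. Numerators over the standard denominator $D(p)$ are written $\widehat S(p)=D(p)S(p)$, $\widehat S^c(p)=D(p)S^c(p)$ and $\widehat{\bar S}(p)=D(p)\bar S(p)$. Let $e_k=12\cdots k$. For $q\in\mathfrak S_k$ and $\pi\in\mathfrak S_m$ ($k\le m\le N$) with $\pi_1<\cdots<\pi_k$, $\sigma_q\cdot\pi\in\mathfrak S_m$ is given by $(\sigma_q\cdot\pi)_i=\pi_{q_i}$ for $i\le k$ and $(\sigma_q\cdot\pi)_i=\pi_i$ for $i>k$. The statistic $c$ is prefix equivariant if $c(\pi)-c(\sigma_q\cdot\pi)=c(e_k)-c(q)$ for all $k$, all $q\in\mathfrak S_k$, and all such $\pi$. *)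

From HB Require Import structures.
From mathcomp Require Import all_boot all_order all_algebra all_fingroup.
Set Implicit Arguments. Unset Strict Implicit. Unset Printing Implicit Defensive.
Import Order.TTheory GRing.Theory Num.Theory.

(* Permutations of {1..m} are modelled by 'S_m = {perm 'I_m}; positions and
   values are shifted to 0..m-1 (only relative order matters).
   The one-line entry pi_i (1-based) is [pv pi (i-1)].                     *)

Definition pv (m : nat) (s : 'S_m) (i : nat) : nat :=
  if insub i is Some j then val (s j) else 0.

(* r in S_n contains p in S_m : m <= n and r^{(m)} = p, i.e. the first m
   entries of r have the same relative order as p. *)
Definition contains (n m : nat) (r : 'S_n) (p : 'S_m) : bool :=
  (m <= n) && [forall a : 'I_m, forall b : 'I_m,
                 (pv r a < pv r b) == (p a < p b)].

Definition statistic := forall m : nat, 'S_m -> nat.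

(* prefix equivariance (stated with sigma_q . pi described entrywise) *)
Definition prefix_equivariant (N : nat) (c : statistic) : Prop :=
  forall (k m : nat) (q : 'S_k) (pi spi : 'S_m),
    1 <= k -> k <= m -> m <= N ->
    (forall i j, i < j -> j < k -> pv pi i < pv pi j) ->
    (forall i, i < k -> pv spi i = pv pi (pv q i)) ->
    (forall i, k <= i -> i < m -> pv spi i = pv pi i) ->
    ((c m pi)%:Z - (c m spi)%:Z = (c k 1%g)%:Z - (c k q)%:Z)%R.

Section Probabilities.
Local Open Scope ring_scope.
Variables (R : realFieldType) (N : nat) (c : statistic) (theta : R).

Definition Dw (m : nat) (p : 'S_m) : R :=
  \sum_(pi : 'S_N | contains pi p) theta ^+ (@c N pi).

(* numerator of S(p): p-winnable permutations (pi_m = N) *)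
Definition Swin (m : nat) (p : 'S_m) : R :=
  \sum_(pi : 'S_N | contains pi p && (pv pi m.-1 == N.-1)%N)
     theta ^+ (@c N pi).

Definition Sp (m : nat) (p : 'S_m) : R := Swin p / Dw p.

(* S^c with fuel; the actual S^c(p) uses fuel N - m *)
Fixpoint Scf (f : nat) (m : nat) (p : 'S_m) : R :=
  match f with
  | 0 => 0
  | f'.+1 => (\sum_(q' : 'S_m.+1 | contains q' p)
                 Dw q' * Num.max (Sp q') (Scf f' q')) / Dw p
  end.

Definition Sc (m : nat) (p : 'S_m) : R := Scf (N - m) p.

Definition Sbar (m : nat) (p : 'S_m) : R := Num.max (Sp p) (Sc p).

Definition Shat (m : nat) (p : 'S_m) : R := Dw p * Sp p.
Definition Schat (m : nat) (p : 'S_m) : R := Dw p * Sc p.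
Definition Sbarhat (m : nat) (p : 'S_m) : R := Dw p * Sbar p.

End Probabilities.

From Pilot Require Import Defs.
From HB Require Import structures.
From mathcomp Require Import all_boot all_order all_algebra all_fingroup.
From mathcomp Require Import zify.
Set Implicit Arguments. Unset Strict Implicit. Unset Printing Implicit Defensive.
Import Order.TTheory GRing.Theory Num.Theory.

(* Write R for the patterns r of size k, r <> q, whose (k-1)-prefix is p.
   The idea is that each r in R is obtained from q by the prefix action
   sigma_r (permuting the first k entries), and prefix equivariance makes
   sigma_r rescale every weight theta^c by the constant
   ratio r = theta^(c r - c q).  Hence D(r) = D(q) ratio r and
   S^c(r) = S^c(q) (by induction on the recursion fuel), while S(r) = 0
   because the entry N cannot sit in the last position of r.
   - Expanding the recursion of S^c(p) over the extensions of p into q and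
     the patterns of R gives the first identity.
   - Sorting the p-winnable permutations by the flattening of their first k
     entries, which always lies in R, and matching each class with the
     q-winnable permutations via sigma_r gives the second identity. *)

Definition perm_of (m : nat) (f : 'I_m -> 'I_m) : 'S_m :=
  insubd (1%g : 'S_m) [ffun i => f i].

Lemma perm_ofE m (f : 'I_m -> 'I_m) : injective f -> perm_of f =1 f.
Proof.
move=> f_inj i; rewrite /perm_of -pvalE insubdK ?ffunE //.
by apply/injectiveP => a b; rewrite !ffunE; apply: f_inj.
Qed.

Lemma pv_ord m (s : 'S_m) (i : 'I_m) : pv s i = val (s i).
Proof. by rewrite /pv valK. Qed.

Lemma pv_ltn m (s : 'S_m) i : (i < m)%N -> (pv s i < m)%N.
Proof. by move=> im; rewrite (pv_ord s (Ordinal im)) ltn_ord. Qed.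

Lemma pv_inj m (s : 'S_m) i j :
  (i < m)%N -> (j < m)%N -> pv s i = pv s j -> i = j.
Proof.
move=> im jm; rewrite (pv_ord s (Ordinal im)) (pv_ord s (Ordinal jm)).
by move/val_inj/perm_inj => [].
Qed.

Lemma pv_id m i : (i < m)%N -> pv (1%g : 'S_m) i = i.
Proof. by move=> im; rewrite (pv_ord _ (Ordinal im)) perm1. Qed.

Lemma pv_mul m (s t : 'S_m) i : (i < m)%N -> pv (s * t)%g i = pv t (pv s i).
Proof. by move=> im; rewrite !(pv_ord _ (Ordinal im)) permM pv_ord. Qed.

Lemma pv_preimage m (s : 'S_m) v : (v < m)%N -> pv s (pv (s^-1)%g v) = v.
Proof. by move=> vm; rewrite -pv_mul ?pv_ltn // mulVg pv_id. Qed.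

Lemma containsP n m (r : 'S_n) (p : 'S_m) :
  reflect ((m <= n)%N /\ forall a b, (a < m)%N -> (b < m)%N ->
             (pv r a < pv r b) = (pv p a < pv p b))
          (contains r p).
Proof.
apply: (iffP andP) => -[mn H]; split => //.
- move=> a b am bm; move/forallP/(_ (Ordinal am))/forallP/(_ (Ordinal bm)): H.
  by rewrite (pv_ord p (Ordinal am)) (pv_ord p (Ordinal bm)) => /eqP.
- by apply/forallP => a; apply/forallP => b; rewrite H // !pv_ord.
Qed.

Lemma contains_trans n m l (pi : 'S_n) (u : 'S_m) (v : 'S_l) :
  contains pi u -> contains u v -> contains pi v.
Proof.
move=> /containsP [mn H1] /containsP [lm H2]; apply/containsP.
split=> [|a b al bl]; first exact: leq_trans lm mn.
by rewrite H1 ?(leq_trans al lm) ?(leq_trans bl lm) // H2.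
Qed.

Lemma contains_restrict n m l (pi : 'S_n) (u : 'S_m) (v : 'S_l) :
  (l <= m)%N -> contains pi u -> contains pi v -> contains u v.
Proof.
move=> lm /containsP [mn H1] /containsP [ln H2]; apply/containsP.
split=> // a b al bl.
by rewrite -H1 ?(leq_trans al lm) ?(leq_trans bl lm) // H2.
Qed.

Lemma contains_id n m : (m <= n)%N -> contains (1%g : 'S_n) (1%g : 'S_m).
Proof.
move=> mn; apply/containsP; split=> // a b am bm.
by rewrite !pv_id // ?(leq_trans am mn) ?(leq_trans bm mn).
Qed.

Definition incr_prefix (k n : nat) (pi : 'S_n) : Prop :=
  forall a b, (a < b)%N -> (b < k)%N -> (pv pi a < pv pi b)%N.

Lemma incr_prefix_id k m : (k <= m)%N -> incr_prefix k (1%g : 'S_m).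
Proof.
move=> km a b ab bk; have bm := leq_trans bk km.
by rewrite !pv_id // (ltn_trans ab bm).
Qed.

Lemma incr_prefix_contains k n m (pi : 'S_n) (t : 'S_m) :
  (k <= m)%N -> contains pi t -> incr_prefix k t -> incr_prefix k pi.
Proof.
move=> km /containsP [mn H] t_incr a b ab bk; have bm := leq_trans bk km.
by rewrite H ?(ltn_trans ab bm) //; apply: t_incr.
Qed.

Lemma incr_prefix_eq1 n (u : 'S_n) : incr_prefix n u -> u = 1%g.
Proof.
move=> u_incr.
suff fixed i : (i < n)%N -> pv u i = i.
  by apply/permP => i; apply: val_inj; rewrite perm1 -pv_ord fixed.
elim/ltn_ind: i => i IH im.
have [y ym uy] : exists2 y, (y < n)%N & pv u y = i.
  by exists (pv (u^-1)%g i); rewrite ?pv_ltn ?pv_preimage.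
case: (ltngtP i y) => iy.
- have ui_lt : (pv u i < i)%N by rewrite -{2}uy; apply: u_incr.
  have := IH _ ui_lt (ltn_trans ui_lt im).
  by move/(pv_inj (pv_ltn u im) im) => e; rewrite e ltnn in ui_lt.
- by move: (IH _ iy ym); rewrite uy => e; rewrite e ltnn in iy.
- by rewrite {1}iy uy.
Qed.

Lemma contains_eq m (u v : 'S_m) : contains u v -> u = v.
Proof.
move=> /containsP [_ H].
suff : (v^-1 * u)%g = 1%g by move=> e; rewrite -(mulKVg v u) e mulg1.
apply: incr_prefix_eq1 => a b ab bm; have am := ltn_trans ab bm.
by rewrite !pv_mul // H ?pv_ltn // -!pv_mul // mulVg !pv_id.
Qed.

Section Flattening.
Variables (n m : nat) (pi : 'S_n).

Definition prefix_rank (i : 'I_m) : nat :=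
  #|[set a : 'I_m | (pv pi a < pv pi i)%N]|.

Lemma prefix_rank_ltn i : (prefix_rank i < m)%N.
Proof.
rewrite /prefix_rank -[X in (_ < X)%N]card_ord -cardsT; apply: proper_card.
by apply/properP; split; [exact: subsetT | exists i; rewrite ?inE // ltnn].
Qed.

Lemma prefix_rank_mono (a b : 'I_m) :
  (pv pi a < pv pi b)%N = (prefix_rank a < prefix_rank b)%N.
Proof.
apply/idP/idP => lt_ab.
  apply: proper_card; apply/properP; split; last by exists a; rewrite !inE ?ltnn.
  by apply/subsetP => x; rewrite !inE => xa; exact: ltn_trans xa lt_ab.
apply: contraTT lt_ab; rewrite -!leqNgt => le_ba.
by apply: subset_leq_card; apply/subsetP => x; rewrite !inE => xb; exact: leq_trans xb le_ba.
Qed.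

Hypothesis mn : (m <= n)%N.

Lemma prefix_rank_inj : injective prefix_rank.
Proof.
move=> a b eq_ab; apply: val_inj.
have an := leq_trans (ltn_ord a) mn; have bn := leq_trans (ltn_ord b) mn.
apply: (@pv_inj _ pi _ _ an bn).
by case: (ltngtP (pv pi a) (pv pi b)) => // /[!prefix_rank_mono]; rewrite eq_ab ltnn.
Qed.

Definition flatten_prefix : 'S_m :=
  perm_of (fun i => insubd i (prefix_rank i)).

Lemma contains_flatten : contains pi flatten_prefix.
Proof.
have rank_val i : val (flatten_prefix i) = prefix_rank i.
  rewrite perm_ofE ?val_insubd ?prefix_rank_ltn // => a b /(congr1 val).
  by rewrite !val_insubd !prefix_rank_ltn => /prefix_rank_inj.
apply/containsP; split=> // a b am bm.
rewrite (pv_ord _ (Ordinal am)) (pv_ord _ (Ordinal bm)) !rank_val.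
exact: prefix_rank_mono (Ordinal am) (Ordinal bm).
Qed.

End Flattening.

(* The prefix action [sigma_s . t] of [s : 'S_k] on [t : 'S_m]: the entries
   in positions [i < k] are permuted by [s], i.e. position [i] receives the
   entry of [t] at position [s i]; later positions are unchanged. *)
Section PrefixAction.
Variables (k : nat) (s : 'S_k).

Definition source_pos (i : nat) : nat := if (i < k)%N then pv s i else i.

Lemma source_pos_ltn m i : (k <= m)%N -> (i < m)%N -> (source_pos i < m)%N.
Proof.
rewrite /source_pos => km im; case: ifP => // ik.
exact: leq_trans (pv_ltn s ik) km.
Qed.

Lemma source_pos_inj : injective source_pos.
Proof.
rewrite /source_pos => i j; case: ifP => ik; case: ifP => jk //.
- exact: pv_inj.
- by move=> e; move: (pv_ltn s ik); rewrite e jk.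
- by move=> e; move: (pv_ltn s jk); rewrite -e ik.
Qed.

Definition sigma (m : nat) : 'S_m := perm_of (fun i => insubd i (source_pos i)).

Lemma sigmaE m (i : 'I_m) : (k <= m)%N -> val (sigma m i) = source_pos i.
Proof.
move=> km; rewrite perm_ofE ?val_insubd ?source_pos_ltn // => a b /(congr1 val).
by rewrite !val_insubd !source_pos_ltn // => /source_pos_inj /val_inj.
Qed.

Definition prefix_act (m : nat) (t : 'S_m) : 'S_m := (sigma m * t)%g.

Lemma prefix_act_inj m : injective (@prefix_act m).
Proof. exact: mulgI. Qed.

Lemma pv_prefix_act m (t : 'S_m) i : (k <= m)%N -> (i < m)%N ->
  pv (prefix_act t) i = pv t (source_pos i).
Proof. by move=> km im; rewrite pv_mul // (pv_ord _ (Ordinal im)) sigmaE. Qed.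

Lemma prefix_act_id : prefix_act (1%g : 'S_k) = s.
Proof.
apply/permP => i; apply: val_inj.
by rewrite /prefix_act mulg1 sigmaE // /source_pos ltn_ord pv_ord.
Qed.

Lemma contains_prefix_act n m (pi : 'S_n) (t : 'S_m) : (k <= m)%N ->
  contains (prefix_act pi) (prefix_act t) = contains pi t.
Proof.
move=> km; have [mn|nm] := leqP m n; last first.
  by rewrite /contains leqNgt nm.
have kn := leq_trans km mn.
apply/containsP/containsP => -[_ H]; split=> // a b am bm.
- pose a' := (sigma m)^-1%g (Ordinal am); pose b' := (sigma m)^-1%g (Ordinal bm).
  have a'n := leq_trans (ltn_ord a') mn; have b'n := leq_trans (ltn_ord b') mn.
  have := H _ _ (ltn_ord a') (ltn_ord b').
  by rewrite !pv_prefix_act // -!sigmaE // !permKV.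
- by rewrite !pv_prefix_act ?(leq_trans am mn) ?(leq_trans bm mn) // H ?source_pos_ltn.
Qed.

End PrefixAction.

Section Positivity.
Local Open Scope ring_scope.
Variables (R : realFieldType) (N : nat) (c : statistic) (theta : R).
Hypothesis theta_gt0 : 0 < theta.

Local Notation Dw := (Dw N c theta).

Lemma weight_ge0 n : 0 <= theta ^+ n.
Proof. by rewrite exprn_ge0 // ltW. Qed.

Lemma Dw_ge0 m (t : 'S_m) : 0 <= Dw t.
Proof. by apply: sumr_ge0 => i _; apply: weight_ge0. Qed.

Lemma Sp_ge0 m (t : 'S_m) : 0 <= Sp N c theta t.
Proof. by rewrite divr_ge0 ?Dw_ge0 // sumr_ge0 // => i _; apply: weight_ge0. Qed.

Lemma Scf_ge0 f m (t : 'S_m) : 0 <= Scf N c theta f t.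
Proof.
elim: f m t => [|f IH] m t //=.
rewrite divr_ge0 ?Dw_ge0 // sumr_ge0 // => v _.
by rewrite mulr_ge0 ?Dw_ge0 // le_max Sp_ge0.
Qed.

Lemma Dw_neq0 m (t : 'S_m) (pi : 'S_N) : contains pi t -> Dw t != 0.
Proof.
move=> pi_t; rewrite gt_eqF // /Defs.Dw (bigD1 pi) //=.
by rewrite ltr_wpDr ?exprn_gt0 // sumr_ge0 // => i _; apply: weight_ge0.
Qed.

End Positivity.

(* Prefix equivariance turns the prefix action into a rescaling: moving the
   first [k] entries of [pi] by [s] multiplies its weight by [ratio s], hence
   multiplies D and the winnable mass by [ratio s] and leaves S and
   (recursively) S^c unchanged, for every prefix increasing on [k] entries. *)
Section Equivariance.
Local Open Scope ring_scope.
Variables (R : realFieldType) (N : nat) (c : statistic) (theta : R) (k : nat).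
Hypotheses (c_equiv : prefix_equivariant N c) (theta_gt0 : 0 < theta).
Hypotheses (k_gt0 : (0 < k)%N) (kN : (k <= N)%N).

Local Notation Dw := (Dw N c theta).
Local Notation Swin := (Swin N c theta).
Local Notation Sp := (Sp N c theta).
Local Notation Scf := (Scf N c theta).

Definition ratio (s : 'S_k) : R := theta ^+ @c k s / theta ^+ @c k 1%g.

Lemma ratio_neq0 s : ratio s != 0.
Proof. by rewrite mulf_neq0 ?invr_eq0 ?expf_neq0 ?gt_eqF. Qed.

Lemma weight_prefix_act (s : 'S_k) (pi : 'S_N) : incr_prefix k pi ->
  theta ^+ @c N (prefix_act s pi) = theta ^+ @c N pi * ratio s.
Proof.
move=> pi_incr.
have act_lo i : (i < k)%N -> pv (prefix_act s pi) i = pv pi (pv s i).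
  by move=> ik; rewrite pv_prefix_act ?(leq_trans ik kN) // /source_pos ik.
have act_hi i : (k <= i)%N -> (i < N)%N -> pv (prefix_act s pi) i = pv pi i.
  by move=> ki iN; rewrite pv_prefix_act // /source_pos ltnNge ki.
have := c_equiv k_gt0 kN (leqnn N) pi_incr act_lo act_hi.
move=> /eqP; rewrite subr_eq addrAC eq_sym subr_eq -!PoszD => /eqP[exp_eq].
rewrite /ratio mulrA -exprD -exp_eq addnC exprD mulfK // expf_neq0 ?gt_eqF //.
Qed.

Lemma Dw_prefix_act (s : 'S_k) m (t : 'S_m) : (k <= m)%N -> incr_prefix k t ->
  Dw (prefix_act s t) = Dw t * ratio s.
Proof.
move=> km t_incr; rewrite /Defs.Dw (reindex_inj (@prefix_act_inj _ s N)) mulr_suml.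
apply: eq_big => [pi|pi]; rewrite contains_prefix_act // => pi_t.
exact/weight_prefix_act/(incr_prefix_contains km pi_t).
Qed.

Lemma Swin_prefix_act (s : 'S_k) m (t : 'S_m) : (k < m)%N -> incr_prefix k t ->
  Swin (prefix_act s t) = Swin t * ratio s.
Proof.
move=> km t_incr; rewrite /Defs.Swin (reindex_inj (@prefix_act_inj _ s N)) mulr_suml.
apply: eq_big => [pi|pi]; rewrite contains_prefix_act ?(ltnW km) //.
  case pi_t: (contains pi t) => //=; have [mN _] := containsP _ _ pi_t.
  have last_m : (m.-1 < m)%N by rewrite prednK // (leq_ltn_trans _ km).
  rewrite pv_prefix_act ?(leq_trans last_m mN) // /source_pos.
  by rewrite ltnNge -ltnS prednK ?km // (leq_ltn_trans _ km).
by case/andP => pi_t _; exact/weight_prefix_act/(incr_prefix_contains (ltnW km) pi_t).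
Qed.

Lemma Sp_prefix_act (s : 'S_k) m (t : 'S_m) : (k < m)%N -> incr_prefix k t ->
  Sp (prefix_act s t) = Sp t.
Proof.
move=> km t_incr; rewrite /Defs.Sp Swin_prefix_act // Dw_prefix_act ?(ltnW km) //.
by rewrite invfM mulrACA divff ?ratio_neq0 // mulr1.
Qed.

Lemma Scf_prefix_act (s : 'S_k) f m (t : 'S_m) : (k <= m)%N -> incr_prefix k t ->
  Scf f (prefix_act s t) = Scf f t.
Proof.
elim: f m t => [|f IH] m t km t_incr //=.
rewrite (reindex_inj (@prefix_act_inj _ s m.+1)) Dw_prefix_act //=.
rewrite (eq_bigl (fun v => contains v t)) => [|v]; last by rewrite contains_prefix_act.
rewrite (eq_bigr (fun v => Dw v * Num.max (Sp v) (Scf f v) * ratio s)).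
  by rewrite -mulr_suml invfM mulrACA divff ?ratio_neq0 // mulr1.
move=> v v_t; have v_incr := incr_prefix_contains km v_t t_incr.
by rewrite Sp_prefix_act ?ltnS // IH ?(leqW km) // Dw_prefix_act ?(leqW km) // mulrAC.
Qed.

End Equivariance.

Lemma contains_id_incr n m (r : 'S_n) : contains r (1%g : 'S_m) -> incr_prefix m r.
Proof.
move=> /containsP [_ H] a b ab bm; have am := ltn_trans ab bm.
by rewrite H // !pv_id.
Qed.

Lemma last_max_eq1 n (r : 'S_n.+1) : incr_prefix n r ->
  (forall a, (a < n)%N -> (pv r a < pv r n)%N) -> r = 1%g.
Proof.
move=> r_incr r_last; apply: incr_prefix_eq1 => a b ab.
rewrite ltnS leq_eqVlt => /predU1P[b_last|]; last exact: r_incr.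
by rewrite b_last; apply: r_last; rewrite -b_last.
Qed.

Lemma pv_lt_max n (pi : 'S_n) a j : (a < n)%N -> (j < n)%N -> a <> j ->
  pv pi j = n.-1 -> (pv pi a < n.-1)%N.
Proof.
move=> an jn a_neq_j pj; have := pv_ltn pi an.
have : pv pi a <> pv pi j by move/(pv_inj an jn).
by rewrite pj; lia.
Qed.

Lemma max_before_last n (r : 'S_n.+2) : r != 1%g ->
  contains r (1%g : 'S_n.+1) -> pv r n = n.+1.
Proof.
move=> r_neq1 /contains_id_incr r_incr.
set j := pv (r^-1)%g n.+1; have jn : (j < n.+2)%N by apply: pv_ltn.
have rj : pv r j = n.+1 by rewrite pv_preimage.
case: (ltngtP j n) => [j_lt|j_gt|j_eq]; last by move: rj; rewrite j_eq.
  by move: (r_incr _ _ j_lt (ltnSn n)) (pv_ltn r (ltnW (ltnSn n.+1))); rewrite rj; lia.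
have j_last : j = n.+1 by lia.
case/eqP: r_neq1; apply: last_max_eq1 => [|a an]; first exact: r_incr.
have r_last : pv r n.+1 = n.+1 by move: rj; rewrite j_last.
by rewrite r_last; apply: (pv_lt_max (j := j)) => //; lia.
Qed.

(* In this section p = e_(k+1) and q = e_(k+2); positions are 0-based as
   in [pv], so the winning position of [p] is [k] and that of [q] is [k+1]. *)
Section Recursion.
Local Open Scope ring_scope.
Variables (R : realFieldType) (N : nat) (c : statistic) (theta : R) (k : nat).
Hypotheses (c_equiv : prefix_equivariant N c) (theta_gt0 : 0 < theta).
Hypothesis kN : (k.+2 <= N)%N.

Local Notation p := (1%g : 'S_k.+1).
Local Notation q := (1%g : 'S_k.+2).
Local Notation Dw := (Dw N c theta).
Local Notation Swin := (Swin N c theta).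
Local Notation Sp := (Sp N c theta).

(* A pattern of [R] is never winnable: the entry [N] at its last position
   would force it to be the identity. *)
Lemma Sp_eq0 (r : 'S_k.+2) : r != q -> contains r p -> Sp r = 0.
Proof.
move=> r_neq1 r_p; rewrite /Defs.Sp /Defs.Swin big1 ?mul0r // => pi /andP[pi_r /eqP pi_win].
case/eqP: r_neq1; apply: last_max_eq1 => [|a ak]; first exact: contains_id_incr.
have [_ H] := containsP _ _ pi_r; rewrite -H ?(ltn_trans ak) //=.
by rewrite pi_win; apply: (pv_lt_max (j := k.+1)) => //; lia.
Qed.

Lemma ratioE (r : 'S_k.+2) :
  theta ^ ((@c _ r)%:Z - (@c _ q)%:Z) = ratio c theta r.
Proof. by rewrite /ratio expfzDr ?gt_eqF // -invr_expz -!exprnP. Qed.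

(* [D], [S] and [S^c] of a pattern [r] of [R] are those of the identity
   rescaled by [ratio r], since [r] is the prefix action of [r] on [q]. *)
Lemma Dw_pattern (r : 'S_k.+2) : Dw r = Dw q * ratio c theta r.
Proof.
rewrite -{1}(prefix_act_id r).
exact: (Dw_prefix_act c_equiv theta_gt0 _ kN r (leqnn _) (incr_prefix_id (leqnn _))).
Qed.

Lemma Sc_pattern (r : 'S_k.+2) : Sc N c theta r = Sc N c theta q.
Proof.
rewrite -{1}(prefix_act_id r).
exact: (Scf_prefix_act c_equiv theta_gt0 _ kN r _ (leqnn _) (incr_prefix_id (leqnn _))).
Qed.

(* First identity: expand [S^c(p)] over the one-entry extensions of [p]. *)
Lemma Schat_decomp : Schat N c theta p = Sbarhat N c theta q + Schat N c theta q *
  \sum_(r : 'S_k.+2 | (r != q) && contains r p) theta ^ ((@c _ r)%:Z - (@c _ q)%:Z).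
Proof.
have p_pos : Dw p != 0 by apply: (Dw_neq0 c theta_gt0 (pi := 1%g)); rewrite contains_id // ltnW.
rewrite /Schat /Sc (_ : N - k.+1 = (N - k.+2).+1)%N /=; last by lia.
rewrite mulrC divfK // (bigD1 q) /=; last exact: contains_id.
congr (_ + _); rewrite mulr_sumr; apply: eq_big => [r|r]; first by rewrite andbC.
case/andP => r_p r_neq1.
rewrite Sp_eq0 // max_r ?Scf_ge0 // ratioE Dw_pattern -/(Sc N c theta r) Sc_pattern.
by rewrite mulrAC.
Qed.

(* A permutation winnable at [p] flattens, on its first [k+2] entries, to a
   pattern of [R]: its entry [N] at position [k] exceeds the next one. *)
Lemma flatten_winner (pi : 'S_N) : contains pi p -> pv pi k = N.-1 ->
  (flatten_prefix k.+2 pi != q) && contains (flatten_prefix k.+2 pi) p.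
Proof.
move=> pi_p pi_win; have pi_flat := contains_flatten pi kN.
rewrite (contains_restrict (leqnSn _) pi_flat pi_p) andbT.
apply/eqP => flat_eq1; move: pi_flat; rewrite flat_eq1 => /contains_id_incr pi_incr.
have next_lt : (pv pi k.+1 < N.-1)%N by apply: (pv_lt_max (j := k)) => //; lia.
by have := pi_incr _ _ (ltnSn k) (ltnSn _); rewrite pi_win; lia.
Qed.

(* The winnable permutations of pattern [r] in [R] are the prefix action of
   [r] on those of [q]: position [k] of the former is position [k+1] of the
   latter. *)
Lemma winner_fiber (r : 'S_k.+2) : r != q -> contains r p ->
  \sum_(pi : 'S_N | contains pi r && (pv pi k == N.-1)) theta ^+ @c N pi
  = Swin q * ratio c theta r.
Proof.
move=> r_neq1 r_p; rewrite /Defs.Swin (reindex_inj (@prefix_act_inj _ r N)) mulr_suml.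
have act_r pi : contains (prefix_act r pi) r = contains pi q.
  by have := contains_prefix_act r pi q (leqnn _); rewrite prefix_act_id.
apply: eq_big => [pi|pi]; rewrite act_r.
  case pi_q: (contains pi q) => //=.
  by rewrite pv_prefix_act ?(ltnW kN) // /source_pos ltnW // max_before_last.
case/andP => /contains_id_incr pi_incr _.
exact: (weight_prefix_act c_equiv theta_gt0 _ kN r pi_incr).
Qed.

Lemma Shat_Swin m (t : 'S_m) : Dw t != 0 -> Shat N c theta t = Swin t.
Proof. by move=> t_pos; rewrite /Shat /Defs.Sp mulrC divfK. Qed.

(* Second identity: sort the winnable permutations of [p] by their pattern. *)
Lemma Shat_decomp : Shat N c theta p = Shat N c theta q *
  \sum_(r : 'S_k.+2 | (r != q) && contains r p) theta ^ ((@c _ r)%:Z - (@c _ q)%:Z).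
Proof.
have p_pos : Dw p != 0 by apply: (Dw_neq0 c theta_gt0 (pi := 1%g)); rewrite contains_id // ltnW.
have q_pos : Dw q != 0 by apply: (Dw_neq0 c theta_gt0 (pi := 1%g)); rewrite contains_id.
rewrite !Shat_Swin // {1}/Defs.Swin mulr_sumr.
rewrite (partition_big (flatten_prefix k.+2) (fun r => (r != q) && contains r p)) /=;
  last by move=> pi /andP[pi_p /eqP]; apply: flatten_winner.
apply: eq_bigr => r /andP[r_neq1 r_p]; rewrite ratioE -winner_fiber //.
apply: eq_bigl => pi; apply/idP/idP.
  by case/andP=> /andP[pi_p ->] /eqP <-; rewrite contains_flatten.
case/andP=> pi_r ->; rewrite (contains_trans pi_r r_p) /=; apply/eqP.
exact: contains_eq (contains_restrict (leqnn _) (contains_flatten pi kN) pi_r).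
Qed.

End Recursion.

Local Open Scope ring_scope.

Theorem theorem3p6 (R : realFieldType) (N : nat) (c : statistic) (theta : R)
    (k : nat) :
  prefix_equivariant N c -> 0 < theta -> (2 <= k)%N -> (k <= N)%N ->
  let p : 'S_k.-1 := 1%g in
  let q : 'S_k := 1%g in
  let sumR := \sum_(r : 'S_k | (r != q) && contains r p)
                 theta ^ ((c k r)%:Z - (c k q)%:Z) in
  Schat N c theta p = Sbarhat N c theta q + Schat N c theta q * sumR /\
  Shat N c theta p = Shat N c theta q * sumR.
Proof.
move=> c_equiv theta_gt0; case: k => [|[|k]] // _ kN /=.
by split; [exact: Schat_decomp | exact: Shat_decomp].
Qed.
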